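(* Let $T$ be a tree such that for every high degree vertex $v$ of $T$, at most one connected component of $T-v$ has more than one vertex. Then $T$ has at most two high degree vertices.
   Context: A high degree vertex (HDV) of a tree is a vertex of degree at least $3$. *)

From mathcomp Require Import all_boot.
Set Implicit Arguments. Unset Strict Implicit. Unset Printing Implicit Defensive.

Section Graphs.
Variables (V : finType) (e : rel V).

Definition simple_graph : Prop := symmetric e /\ irreflexive e.

Definition gconnected : Prop := forall x y : V, connect e x y.

Definition acyclic : Prop :=
  forall c : seq V, uniq c -> 2 < size c -> ~~ cycle e c.

Definition is_tree : Prop := [/\ simple_graph, gconnected & acyclic].

Definition degree (v : V) : nat := #|[set w | e v w]|.

Definition hdv (v : V) : bool := 2 < degree v.

Definition del_rel (v : V) : rel V :=
  [rel x y | [&& e x y, x != v & y != v]].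

(* the connected component of T - v containing u (for u != v) *)
Definition comp_del (v u : V) : {set V} := [set w | connect (del_rel v) u w].

Definition at_most_one_big_comp (v : V) : Prop :=
  forall u1 u2 : V, u1 != v -> u2 != v ->
    1 < #|comp_del v u1| -> 1 < #|comp_del v u2| ->
    comp_del v u1 = comp_del v u2.

End Graphs.

From mathcomp Require Import all_boot.
Set Implicit Arguments. Unset Strict Implicit. Unset Printing Implicit Defensive.

(* In a tree, two distinct neighbours of a vertex m lie in different components
   of T - m.  Hence any three vertices a, b, c have a median m, the vertex where
   a path from c first meets the path from a to b: m separates every two of
   a, b, c other than m itself.  If a, b, c were high degree vertices, m would be
   one as well (it is one of them, or it has a neighbour towards each of them),
   and the hypothesis at m would put any two of a, b, c other than m into the
   same component of T - m, as each lies in a component with a second vertex. *)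

Lemma connect_uniq_path (T : finType) (r : rel T) x y :
  connect r x y -> exists p, [/\ path r x p, uniq (x :: p) & last x p = y].
Proof. by case/connectP=> p /shortenP[p' rp' up' _] ->; exists p'. Qed.

Lemma path_first_entry (T : eqType) (r : rel T) (s : seq T) x p :
  path r x p -> last x p \in s -> x \notin s ->
  exists q m, [/\ path r x q, all (fun v => v \notin s) (x :: q), m \in s
                & r (last x q) m].
Proof.
elim: p x => [|y p IH] x /=; first by move=> _ ->.
case/andP=> rxy yp ls xs; have [ys | yNs] := boolP (y \in s).
  by exists [::], y; rewrite /= xs.
have [q [m [yq qNs ms rm]]] := IH y yp ls yNs.
by exists (y :: q), m; rewrite /= rxy xs.
Qed.

Section TreeSeparation.
Variables (V : finType) (e : rel V).
Hypotheses (e_sym : symmetric e) (e_irr : irreflexive e).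

Lemma del_rel_path m x p :
  x != m -> path (del_rel e m) x p = path e x p && (m \notin x :: p).
Proof.
elim: p x => [|y p IH] x xm /=; first by rewrite inE eq_sym xm.
rewrite inE negb_or eq_sym xm /=; have [->|ym] := eqVneq y m.
  by rewrite /del_rel /= eqxx mem_head /= !(andbF, andFb).
by rewrite IH // /del_rel /= xm ym !andbT andbA.
Qed.

Lemma connect_del_rel m x p :
  path e x p -> m \notin x :: p -> connect (del_rel e m) x (last x p).
Proof.
move=> xp mxp; apply/connectP; exists p => //.
by rewrite del_rel_path ?xp //; apply: contraNneq mxp => ->; exact: mem_head.
Qed.

Lemma connect_del_sym m : connect_sym (del_rel e m).
Proof.
by apply: sym_connect_sym => x y; rewrite /del_rel /= e_sym [(x != m) && _]andbC.
Qed.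

Lemma uniq_path_pred x p m : path e x p -> uniq (x :: p) -> m \in p ->
  exists2 y, y \in x :: p & e m y && connect (del_rel e m) x y.
Proof.
move=> xp up /splitPr mp; case: mp xp up => p1 p2.
rewrite cat_path -cat_cons cat_uniq => /andP[xp1 /= /andP[ym _]].
case/and3P=> _ /norP[mp1 _] _.
exists (last x p1); first by rewrite -cat_cons mem_cat mem_last.
by rewrite e_sym ym connect_del_rel.
Qed.

Lemma uniq_path_succ x p m :
  path e x p -> uniq (x :: p) -> m \in x :: p -> m != last x p ->
  exists2 z, z \in p & e m z && connect (del_rel e m) z (last x p).
Proof.
move=> xp up /splitPl mp; case: mp xp up => p1 [|z p2] <-.
  by rewrite cats0 eqxx.
rewrite cat_path last_cat -cat_cons cat_uniq => /andP[_ pz] /and3P[_ disj _] _.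
case/andP: pz => mz zp2; exists z; first by rewrite mem_cat mem_head orbT.
rewrite mz connect_del_rel //; apply: contra disj => mzp2.
by apply/hasP; exists (last x p1) => //; exact: mem_last.
Qed.

Hypothesis e_connected : gconnected e.

Lemma connect_del_neighbor m x :
  x != m -> exists2 u, e m u & connect (del_rel e m) x u.
Proof.
move=> xm; have [p [xp up lp]] := connect_uniq_path (e_connected x m).
have : m \in x :: p by rewrite -lp mem_last.
rewrite inE eq_sym (negbTE xm) => mp.
by have [u _ /andP[emu xu]] := uniq_path_pred xp up mp; exists u.
Qed.

Lemma disconnected_triple_hdv m x1 x2 x3 : x1 != m -> x2 != m -> x3 != m ->
  ~~ connect (del_rel e m) x1 x2 -> ~~ connect (del_rel e m) x2 x3 ->
  ~~ connect (del_rel e m) x3 x1 -> hdv e m.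
Proof.
move=> x1m x2m x3m s12 s23 s31.
have [u1 e1 c1] := connect_del_neighbor x1m.
have [u2 e2 c2] := connect_del_neighbor x2m.
have [u3 e3 c3] := connect_del_neighbor x3m.
have neighbors_neq xi xj ui uj : connect (del_rel e m) xi ui ->
    connect (del_rel e m) xj uj -> ~~ connect (del_rel e m) xi xj -> ui != uj.
  move=> ci cj; apply: contraNneq => Eij; rewrite Eij in ci.
  rewrite connect_del_sym in cj.
  exact: connect_trans ci cj.
apply/card_gt2P; exists u1, u2, u3; rewrite !inE e1 e2 e3.
split=> //; split; first exact: neighbors_neq c1 c2 s12.
  exact: neighbors_neq c2 c3 s23.
exact: neighbors_neq c3 c1 s31.
Qed.

Hypothesis e_acyclic : acyclic e.

Lemma neighbors_disconnected_del m u1 u2 :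
  e m u1 -> e m u2 -> u1 != u2 -> ~~ connect (del_rel e m) u1 u2.
Proof.
move=> em1 em2 u12; apply/negP => /connect_uniq_path[p [pd up lp]].
have u1m : u1 != m by apply: contraTneq em1 => ->; rewrite e_irr.
rewrite del_rel_path // in pd; case/andP: pd => pe mp.
apply: (negP (e_acyclic (c := m :: u1 :: p) _ _)).
- by rewrite cons_uniq mp.
- by case: p {pe mp up} lp => //= E; rewrite E eqxx in u12.
- by rewrite /= rcons_path em1 pe lp e_sym em2.
Qed.

Lemma disconnected_del_via m u1 u2 x1 x2 : e m u1 -> e m u2 -> u1 != u2 ->
  connect (del_rel e m) x1 u1 -> connect (del_rel e m) x2 u2 ->
  ~~ connect (del_rel e m) x1 x2.
Proof.
move=> em1 em2 u12 c1 c2; apply: contra (neighbors_disconnected_del em1 em2 u12).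
by rewrite connect_del_sym in c1; move/(connect_trans c1)/connect_trans; apply.
Qed.

Lemma uniq_path_inner_disconnected x p m :
  path e x p -> uniq (x :: p) -> m \in p -> m != last x p ->
  ~~ connect (del_rel e m) x (last x p).
Proof.
move=> xp up /splitPr mp; case: mp xp up => p1 [|z p2].
  by rewrite last_cat eqxx.
rewrite cat_path last_cat -cat_cons cat_uniq => /andP[xp1 /= /and3P[ym mz zp2]].
case/and3P=> _ /norP[mp1 /norP[zp1 _]] /andP[mzp2 _] _.
apply: (disconnected_del_via (u1 := last x p1) (u2 := z)).
- by rewrite e_sym.
- by [].
- by apply: contraNneq zp1 => <-; exact: mem_last.
- exact: connect_del_rel.
- by rewrite connect_del_sym connect_del_rel.
Qed.

Lemma median_vertex a b c : exists m,
  [/\ a != m -> b != m -> ~~ connect (del_rel e m) a b,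
      b != m -> c != m -> ~~ connect (del_rel e m) b c &
      c != m -> a != m -> ~~ connect (del_rel e m) c a].
Proof.
have [p [ap up <-]] := connect_uniq_path (e_connected a b).
have inner m : m \in a :: p -> a != m -> m \in p.
  by rewrite inE eq_sym => /orP[/eqP->|]; rewrite ?eqxx.
have [cp | cNp] := boolP (c \in a :: p).
  exists c; split; rewrite ?eqxx // => ac bc.
  by apply: uniq_path_inner_disconnected; rewrite 1?eq_sym ?inner.
have /connectP[q0 cq0 lq0] := e_connected c a.
have lq0s : last c q0 \in a :: p by rewrite -lq0 mem_head.
have [q [m [cq qNs ms ewm]]] := path_first_entry cq0 lq0s cNp.
set w := last c q in ewm.
have wNs : w \notin a :: p by apply: (allP qNs); exact: mem_last.
have cw : connect (del_rel e m) c w.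
  by apply: connect_del_rel => //; apply: contraTN ms => /(allP qNs).
have emw : e m w by rewrite e_sym.
exists m; split.
- move=> am bm; apply: uniq_path_inner_disconnected; rewrite 1?eq_sym ?inner //.
- move=> bm _; rewrite eq_sym in bm.
  have [z zp /andP[emz zb]] := uniq_path_succ ap up ms bm.
  rewrite connect_del_sym; apply: (disconnected_del_via emw emz) cw _.
    by apply: contraNneq wNs => ->; rewrite inE zp orbT.
  by rewrite connect_del_sym.
- move=> _ am; have [y yp /andP[emy ay]] := uniq_path_pred ap up (inner m ms am).
  apply: (disconnected_del_via emw emy) cw ay.
  by apply: contraNneq wNs => ->.
Qed.

End TreeSeparation.

Section BigComponents.
Variables (V : finType) (e : rel V).
Hypothesis e_irr : irreflexive e.

Lemma hdv_comp_del_gt1 m x : hdv e x -> x != m -> 1 < #|comp_del e m x|.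
Proof.
move=> /card_gt2P[y [z [_ [[ey ez _] [yz _ _]]]]] xm.
rewrite !inE in ey ez.
have [u exu um] : exists2 u, e x u & u != m.
  by have [ym|] := eqVneq y m; [exists z; rewrite // -ym eq_sym | exists y].
apply/card_gt1P; exists x, u; rewrite !inE connect0 connect1 /=.
  by split=> //; apply: contraTneq exu => <-; rewrite e_irr.
by rewrite /del_rel /= exu xm.
Qed.

Hypothesis hdv_one_big : forall v, hdv e v -> at_most_one_big_comp e v.

Lemma hdv_connect_del m x y : hdv e m -> hdv e x -> hdv e y ->
  x != m -> y != m -> connect (del_rel e m) x y.
Proof.
move=> hm hx hy xm ym.
have := hdv_one_big hm xm ym (hdv_comp_del_gt1 hx xm) (hdv_comp_del_gt1 hy ym).
by move/setP/(_ y); rewrite !inE connect0 => ->.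
Qed.

End BigComponents.

Theorem lemma2p2 (V : finType) (e : rel V) :
  is_tree e ->
  (forall v : V, hdv e v -> at_most_one_big_comp e v) ->
  #|[set v | hdv e v]| <= 2.
Proof.
move=> [[e_sym e_irr] e_conn e_acyc] one_big.
rewrite leqNgt; apply/negP => /card_gt2P[a [b [c [[ha hb hc] [ab bc ca]]]]].
rewrite !inE in ha hb hc.
have [m [sep_ab sep_bc sep_ca]] := median_vertex e_sym e_irr e_conn e_acyc a b c.
have hm : hdv e m.
  have [<-|am] := eqVneq a m => //; have [<-|bm] := eqVneq b m => //.
  have [<-|cm] := eqVneq c m => //.
  exact: (disconnected_triple_hdv e_sym e_conn am bm cm
           (sep_ab am bm) (sep_bc bm cm) (sep_ca cm am)).
have conn := hdv_connect_del e_irr one_big hm.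
have [am|am] := eqVneq a m.
  by subst m; rewrite eq_sym in ab; case/negP: (sep_bc ab ca); apply: conn.
have [bm|bm] := eqVneq b m.
  by subst m; rewrite eq_sym in bc; case/negP: (sep_ca bc am); apply: conn.
by case/negP: (sep_ab am bm); apply: conn.
Qed.
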